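(* Let $p>1$. Then for all $0\le\eta\le1$, $$\psi\!\left(-\frac1p,\eta^{p/(p-1)}\right)=\psi\!\left(\frac1{p-1},\eta\right),$$ where for $\beta>-1$, $\beta\neq0$, and $0\le\eta\le1$, $$\psi(\beta,\eta)=\begin{cases}\dfrac{(1+\eta^{\beta+1})^{1/\beta}}{(1+\eta)^{(\beta+1)/\beta}}+\dfrac{(\beta+1)^{(\beta+1)/\beta}}{\beta}\left[\dfrac1{1+\eta^{\beta+1}}-\dfrac1{1+\eta}\right], & 0\le\eta\le\eta_1(\beta),\\[2ex] 2\dfrac{(1+\eta^{\beta+1})^{1/\beta}}{(1+\eta)^{(\beta+1)/\beta}}, & \eta_1(\beta)\le\eta\le1,\end{cases}$$ and $\eta_1(\beta)\in(0,1)$ is the root of the equation $\eta^\beta=\dfrac{1}{1+\beta(\eta+1)}$. *)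

(* real powers via powR (0 `^ x = 0 for x <> 0). *)
From HB Require Import structures.
From mathcomp Require Import all_boot all_order all_algebra.
From mathcomp Require Import all_classical all_reals all_analysis.
Set Implicit Arguments. Unset Strict Implicit. Unset Printing Implicit Defensive.
Import Order.TTheory GRing.Theory Num.Theory.
Local Open Scope classical_set_scope.
Local Open Scope ring_scope.

(* eta_1(beta): the root in (0,1) of  eta^beta = 1 / (1 + beta (eta + 1)),
   chosen by (classical) choice; the paper asserts it is "the" root. *)
Definition eta1 {R : realType} (b : R) : R :=
  xget 0 [set x : R | 0 < x < 1 /\ x `^ b = 1 / (1 + b * (x + 1))].

Definition psi_f {R : realType} (b e : R) : R :=
  (1 + e `^ (b + 1)) `^ (1 / b) / (1 + e) `^ ((b + 1) / b).

Definition psi {R : realType} (b e : R) : R :=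
  if e <= eta1 b then
    psi_f b e + (b + 1) `^ ((b + 1) / b) / b *
                ((1 + e `^ (b + 1))^-1 - (1 + e)^-1)
  else 2 * psi_f b e.

From HB Require Import structures.
From mathcomp Require Import all_boot all_order all_algebra.
From mathcomp Require Import all_classical all_reals all_analysis.
From mathcomp Require Import ring lra.
(* For b > 0 put b' = -b/(b+1) (so b' + 1 = 1/(b+1)) and x = e^(b+1), so that
   x^(b'+1) = e.  Then the common factor of psi and the coefficient of its bracket
   for (b', x) turn into those for (b, e), the coefficient and the bracket both
   changing sign.  The root equation of eta_1(b') at y^(b+1) and that of eta_1(b)
   at y are both equivalent to y^b (1 + b(y+1)) = 1, whose left side increases
   strictly in y; so eta_1(b) is unique and eta_1(b') = eta_1(b)^(b+1), hence the
   two case splits agree.  The corollary is the case b = 1/(p-1). *)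

Set Implicit Arguments.
Unset Strict Implicit.
Unset Printing Implicit Defensive.

Import Order.TTheory GRing.Theory Num.Theory.
Local Open Scope classical_set_scope.
Local Open Scope ring_scope.

Lemma xget_image {T U : choiceType} (x0 : T) (f : T -> U) (P : set T) :
  is_subset1 P -> xget (f x0) (f @` P) = f (xget x0 P).
Proof.
case: (xgetP x0 P) => [x _ Px | NP] P1.
  apply: xget_subset1; first by exists x.
  by move=> _ _ [y Py <-] [z Pz <-]; rewrite (P1 y z).
by apply: xgetPN => _ [x Px _]; exact: NP Px.
Qed.

Lemma powR_lt1 {R : realType} (r y : R) : 0 < r -> 0 <= y < 1 -> y `^ r < 1.
Proof.
move=> r0 /andP[y0 y1].
by have := @gt0_ltr_powR R r r0 y 1; rewrite !nnegrE powR1; apply.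
Qed.

Definition eta1_roots {R : realType} (b : R) : set R :=
  [set x : R | 0 < x < 1 /\ x `^ b = 1 / (1 + b * (x + 1))].

Lemma eta1E {R : realType} (b : R) : eta1 b = xget 0 (eta1_roots b).
Proof. by []. Qed.

Lemma eta1_ge0 {R : realType} (b : R) : 0 <= eta1 b.
Proof. by rewrite eta1E; case: xgetP => // x _ [/andP[/ltW]]. Qed.

Section DualIndex.
Variables (R : realType) (b : R).
Hypothesis b_gt0 : 0 < b.

Let b' := - b / (b + 1).

Let b1_neq0 : b + 1 != 0. Proof. by apply/eqP; move: b_gt0; lra. Qed.
Let b_neq0 : b != 0. Proof. by apply/eqP; move: b_gt0; lra. Qed.
Let b1_gt0 : 0 < b + 1. Proof. by move: b_gt0; lra. Qed.

Lemma dual_indexD1 : b' + 1 = (b + 1)^-1.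
Proof. by rewrite /b'; field. Qed.

Lemma inv_dual_index : 1 / b' = - ((b + 1) / b).
Proof. by rewrite /b'; field; rewrite b_neq0 b1_neq0. Qed.

Lemma dual_index_ratio : (b' + 1) / b' = - (1 / b).
Proof. by rewrite /b'; field; rewrite b_neq0 b1_neq0. Qed.

Lemma powR_dual_indexD1 e : 0 <= e -> (e `^ (b + 1)) `^ (b' + 1) = e.
Proof. by move=> e0; rewrite -powRrM dual_indexD1 mulfV ?powRr1. Qed.

Lemma root_eq_dual y : 0 < y ->
  (y `^ (b + 1)) `^ b' = 1 / (1 + b' * (y `^ (b + 1) + 1)) <->
  y `^ b = 1 / (1 + b * (y + 1)).
Proof.
move=> y0; set t := y `^ b.
have t0 : 0 < t by rewrite powR_gt0.
have -> : (y `^ (b + 1)) `^ b' = t^-1.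
  by rewrite -powRrM (_ : (b + 1) * b' = - b) ?powRN //; rewrite /b'; field.
have -> : y `^ (b + 1) = y * t.
  by rewrite powRD ?(gt_eqF y0) ?implybT // powRr1 ?ltW // mulrC.
have D0 : 1 + b * (y + 1) != 0 by apply/eqP; have := b_gt0; nra.
have lin : t - (1 + b' * (y * t + 1)) = (t * (1 + b * (y + 1)) - 1) / (b + 1).
  by rewrite /b'; field.
rewrite !div1r; split => [/invr_inj | tD].
  move=> /eqP; rewrite -subr_eq0 lin mulf_eq0 invr_eq0 (negPf b1_neq0) orbF.
  by rewrite subr_eq0 => /eqP tD; apply: (mulIf D0); rewrite tD mulVf.
congr (_^-1); apply/eqP.
by rewrite -subr_eq0 lin tD mulVf // subrr mul0r.
Qed.

Lemma eta1_roots_dual :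
  eta1_roots b' = (fun y => y `^ (b + 1)) @` eta1_roots b.
Proof.
have b'1_gt0 : 0 < b' + 1 by rewrite dual_indexD1 invr_gt0; move: b_gt0; lra.
apply/seteqP; split.
  move=> x [/andP[x0 x1] hx]; have xK := powR_dual_indexD1 (ltW x0).
  rewrite powRAC in xK.
  exists (x `^ (b' + 1)); last exact: xK.
  split; first by rewrite powR_gt0 // powR_lt1 // ltW.
  by apply/root_eq_dual; rewrite ?powR_gt0 // xK.
move=> _ [y [/andP[y0 y1] hy] <-].
split; first by rewrite powR_gt0 // powR_lt1 // ltW.
exact/root_eq_dual.
Qed.

Lemma eta1_roots_subset1 : is_subset1 (eta1_roots b).
Proof.
pose F y := y `^ b * (1 + b * (y + 1)).
have F_homo : {in Num.nneg &, {homo F : u v / u < v}}.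
  move=> u v u0 v0 uv; rewrite /F ltr_pM ?powR_ge0 ?gt0_ltr_powR //.
    by move: u0 b_gt0; rewrite nnegrE; nra.
  by move: b_gt0; nra.
have F_root y : eta1_roots b y -> F y = 1.
  move=> [/andP[y0 _] hy]; rewrite /F hy div1r mulVf //.
  by apply/eqP; move: b_gt0; nra.
move=> y z Ry Rz; apply: (inc_inj_in (le_mono_in F_homo)).
- by case: Ry => /andP[/ltW].
- by case: Rz => /andP[/ltW].
- by rewrite !F_root.
Qed.

Lemma eta1_dual : eta1 b' = eta1 b `^ (b + 1).
Proof.
(* 0 `^ (b + 1) = 0 also matches the default values when no root exists. *)
rewrite !eta1E eta1_roots_dual -[in LHS](powR0 b1_neq0).
exact/xget_image/eta1_roots_subset1.
Qed.

Lemma psi_f_dual e : 0 <= e -> psi_f b' (e `^ (b + 1)) = psi_f b e.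
Proof.
move=> e0; rewrite /psi_f powR_dual_indexD1 //.
by rewrite inv_dual_index dual_index_ratio !powRN invrK mulrC.
Qed.

Lemma psi_coef_dual :
  (b' + 1) `^ ((b' + 1) / b') / b' = - ((b + 1) `^ ((b + 1) / b) / b).
Proof.
rewrite dual_index_ratio dual_indexD1 -[(b + 1)^-1]powR_inv1 ?(ltW b1_gt0) //.
rewrite -powRrM mulN1r opprK (_ : (b + 1) / b = 1 / b + 1); last by field.
rewrite powRD ?b1_neq0 ?implybT // powRr1 ?(ltW b1_gt0) //.
by rewrite /b'; field; rewrite b_neq0 b1_neq0.
Qed.

Lemma psi_dual e : 0 <= e -> psi b' (e `^ (b + 1)) = psi b e.
Proof.
move=> e0; have powR_mono := le_mono_in (gt0_ltr_powR b1_gt0).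
rewrite /psi eta1_dual powR_mono ?nnegrE ?eta1_ge0 //.
rewrite psi_f_dual // psi_coef_dual powR_dual_indexD1 //.
by case: ifP => // _; rewrite mulNr -mulrN opprB.
Qed.
End DualIndex.

Theorem corollary2p2 (R : realType) (p eta : R) :
  1 < p -> 0 <= eta <= 1 ->
  psi (- (1 / p)) (eta `^ (p / (p - 1))) = psi (1 / (p - 1)) eta.
Proof.
move=> p_gt1 /andP[eta_ge0 _].
have p_neq0 : p != 0 by apply/eqP; lra.
have p1_neq0 : p - 1 != 0 by apply/eqP; lra.
have b_gt0 : 0 < 1 / (p - 1) by rewrite divr_gt0 //; lra.
have := psi_dual b_gt0 eta_ge0.
rewrite (_ : 1 / (p - 1) + 1 = p / (p - 1)); last by field.
by rewrite (_ : - (1 / (p - 1)) / (p / (p - 1)) = - (1 / p)) //; field; rewrite p_neq0 p1_neq0.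
Qed.
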